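(* Let $n$ be a nonnegative integer. Suppose there exist a nonnegative integer $B$ and integers $x,y,z$ such that $$\frac{2n+10B}{3}-10B^2=2x^2+3y^2+4z^2+(2x+3y+4z)^2<(B+1)^2.$$ Then there exist nonnegative integers $w_0,x_0,y_0,z_0$ with $n=p_5(w_0)+2p_5(x_0)+3p_5(y_0)+4p_5(z_0)$.
   Context: For $k\in\mathbb{Z}$, $p_5(k)=k(3k-1)/2$. *)

From mathcomp Require Import all_boot all_order all_algebra.
Set Implicit Arguments. Unset Strict Implicit. Unset Printing Implicit Defensive.
Import Order.TTheory GRing.Theory Num.Theory.
Local Open Scope ring_scope.

(* Generalized pentagonal numbers p_5(k) = k(3k-1)/2; k(3k-1) is always even,
   so the integer division is exact. *)
Definition p5 (k : int) : int := ((k * (3 * k - 1)) %/ 2)%Z.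

From mathcomp Require Import all_boot all_order all_algebra.
From mathcomp Require Import zify ring.
Import Order.TTheory GRing.Theory Num.Theory.
Local Open Scope ring_scope.

(* Put s = 2x + 3y + 4z and Q = 2x^2 + 3y^2 + 4z^2 + s^2.  The shifts B - s, B + x,
   B + y, B + z have weighted sum (weights 1, 2, 3, 4) equal to 10B, so the
   cross terms cancel in the weighted sum of k(3k - 1) and the representation
   of n drops out of the hypothesis.  The shifts are nonnegative because
   u^2 <= Q < (B + 1)^2 forces |u| <= B for u = s, x, y, z. *)

Lemma mul2_p5 (k : int) : 2 * p5 k = k * (3 * k - 1).
Proof.
rewrite /p5; have [r /andP[r_ge0 r_lt2] ->] : exists2 r, 0 <= r < 2 & k = (k %/ 2)%Z * 2 + r.
  by exists (k %% 2)%Z; [rewrite modz_ge0 ?ltz_pmod | exact: divz_eq].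
set q := (k %/ 2)%Z; have [->|->] : r = 0 \/ r = 1 by lia.
- have -> : (q * 2 + 0) * (3 * (q * 2 + 0) - 1) = q * (6 * q - 1) * 2 by ring.
  by rewrite mulzK //; ring.
- have -> : (q * 2 + 1) * (3 * (q * 2 + 1) - 1) = (q * 2 + 1) * (3 * q + 1) * 2 by ring.
  by rewrite mulzK //; ring.
Qed.

Lemma p5_shift_sum (B x y z : int) :
  2 * (p5 (B - (2 * x + 3 * y + 4 * z)) + 2 * p5 (B + x) + 3 * p5 (B + y)
       + 4 * p5 (B + z))
  = 3 * (2 * x ^+ 2 + 3 * y ^+ 2 + 4 * z ^+ 2 + (2 * x + 3 * y + 4 * z) ^+ 2
         + 10 * B ^+ 2) - 10 * B.
Proof. by rewrite !mulrDr ![2 * (_ * p5 _)]mulrCA !mul2_p5; ring. Qed.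

Lemma sqr_lt_sqrS_addr_ge0 (B u : int) :
  0 <= B -> u ^+ 2 < (B + 1) ^+ 2 -> 0 <= B + u.
Proof. by move=> B_ge0 u_lt; nia. Qed.

Lemma mul2n_of_rat_eq (n B : nat) (Q : int) :
  ((2 * n + 10 * B)%:R / 3 - 10 * (B%:R) ^+ 2 : rat) = Q%:~R ->
  2 * n%:Z = 3 * (Q + 10 * B%:Z ^+ 2) - 10 * B%:Z.
Proof.
move=> eqQ; apply: (@intr_inj rat).
have -> : (3 * (Q + 10 * B%:Z ^+ 2) - 10 * B%:Z)%:~R
          = 3 * (Q%:~R + 10 * B%:R ^+ 2) - 10 * B%:R :> rat by ring.
by rewrite -eqQ natrD !natrM; field.
Qed.

Theorem lemma3p2 (n : nat) :
  (exists (B : nat) (x y z : int),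
      ((2 * n + 10 * B)%:R / 3 - 10 * (B%:R) ^+ 2 : rat)
        = (2 * x ^+ 2 + 3 * y ^+ 2 + 4 * z ^+ 2 + (2 * x + 3 * y + 4 * z) ^+ 2)%:~R
   /\ 2 * x ^+ 2 + 3 * y ^+ 2 + 4 * z ^+ 2 + (2 * x + 3 * y + 4 * z) ^+ 2
        < (B%:Z + 1) ^+ 2) ->
  exists w0 x0 y0 z0 : nat,
    n%:Z = p5 w0%:Z + 2 * p5 x0%:Z + 3 * p5 y0%:Z + 4 * p5 z0%:Z.
Proof.
move=> [B [x [y [z [/mul2n_of_rat_eq eq2n ltQ]]]]].
set s := 2 * x + 3 * y + 4 * z in eq2n ltQ.
set Q := 2 * x ^+ 2 + 3 * y ^+ 2 + 4 * z ^+ 2 + s ^+ 2 in eq2n ltQ.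
have shift_ge0 u : u ^+ 2 <= Q -> 0 <= B%:Z + u.
  by move=> le_uQ; apply: sqr_lt_sqrS_addr_ge0 => //; apply: le_lt_trans ltQ.
exists (absz (B%:Z - s)), (absz (B%:Z + x)), (absz (B%:Z + y)), (absz (B%:Z + z)).
rewrite !gez0_abs ?shift_ge0 ?sqrrN //.
  by apply: (@mulfI _ 2) => //; rewrite p5_shift_sum.
all: have := sqr_ge0 x; have := sqr_ge0 y; have := sqr_ge0 z; have := sqr_ge0 s.
all: rewrite /Q; clearbody s; lia.
Qed.
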